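(* Let $\Bbbk$ be a field, $H$ a Hopf $\Bbbk$-algebra with bijective antipode, and $A$ a left $H$-module $\Bbbk$-algebra. (a) If the map $\kappa_H\colon\operatorname{Spec} A\to H\text{-}\operatorname{Spec} A$, $P\mapsto P\!:\!H$, is surjective and $A$ has the Jacobson property, then every $H$-locally closed $H$-prime ideal of $A$ is $H$-primitive. (b) If $A$ satisfies the weak Nullstellensatz, then every $H$-primitive ideal of $A$ is $H$-rational.
   Context: A left $H$-module algebra is a $\Bbbk$-algebra $A$ with $1$ that is a left $H$-module via $h\otimes a\mapsto h.a$ such that $h.(ab)=(h_1.a)(h_2.b)$ and $h.1=\varepsilon(h)1$. An $H$-ideal is a two-sided ideal which is an $H$-submodule; an $H$-ideal $I$ is $H$-prime if $A/I\ne0$ and the product of any two nonzero $H$-ideals of $A/I$ is nonzero; $H\text{-}\operatorname{Spec} A$ is the set of $H$-primes. For an ideal $P$, $P\!:\!H=\{a\in A\mid H.a\subseteq P\}$. An $H$-prime $I$ is $H$-locally closed if $I \subsetneq \bigcap\{J\in H\text{-}\operatorname{Spec} A \mid J\supsetneq I\}$ (i.e. $\{I\}$ is locally closed in the topology on $H\text{-}\operatorname{Spec} A$ with closed sets $\{Q\mid Q\supseteq S\}$); $I$ is $H$-primitive if $I=P\!:\!H$ for some primitive ideal $P$ of $A$. For a ring $R$, $\operatorname{Q} R$ is the symmetric (Martindale) ring of quotients, $\mathcal{C} R$ its center, $D_q=\{r\in R\mid qRr\subseteq R,\ rRq\subseteq R\}$; for an $H$-module algebra $B$, $\mathcal{C}^H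 B=\{q\in\mathcal{C} B \mid h.(dq)=(h.d)q,\ h.(qd)=q(h.d)\ \forall h\in H, d\in D_q\}$. An $H$-prime $I$ is $H$-rational if the field $\mathcal{C}^H(A/I)$ is algebraic over $\Bbbk$. $A$ has the Jacobson property if every prime ideal of $A$ is an intersection of primitive ideals. $A$ satisfies the weak Nullstellensatz if for every irreducible left $A$-module $V$ the division algebra $\operatorname{End}_A(V)$ is algebraic over $\Bbbk$. *)

From mathcomp Require Import all_boot all_order all_algebra.
Set Implicit Arguments. Unset Strict Implicit. Unset Printing Implicit Defensive.
Import GRing.Theory.
Local Open Scope ring_scope.

Definition incl (T : Type) (I J : T -> Prop) : Prop := forall x, I x -> J x.

(* Tensors.  An element of U (x) V is represented by a finite list of pure   *)
(* tensors  sum_i u_i (x) v_i ; two representatives are equal in U (x) V iff *)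
(* every k-bilinear map out of U x V takes the same value on them (universal *)
(* property of the tensor product).  Likewise for U (x) V (x) X.            *)
Section Tensor.
Variable k : fieldType.

Definition bilinear_map (U V W : lmodType k) (f : U -> V -> W) : Prop :=
  (forall (a : k) x y v, f (a *: x + y) v = a *: f x v + f y v) /\
  (forall (a : k) u x y, f u (a *: x + y) = a *: f u x + f u y).

Definition trilinear_map (U V X W : lmodType k) (f : U -> V -> X -> W) : Prop :=
  [/\ (forall (a : k) x y v w, f (a *: x + y) v w = a *: f x v w + f y v w),
      (forall (a : k) u x y w, f u (a *: x + y) w = a *: f u x w + f u y w) &
      (forall (a : k) u v x y, f u v (a *: x + y) = a *: f u v x + f u v y)].

Definition tsum (U V W : lmodType k) (f : U -> V -> W) (t : seq (U * V)) : W :=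
  \sum_(p <- t) f p.1 p.2.
End Tensor.

(* Hopf algebras.  Delta h = sum h_1 (x) h_2 (a representative in H (x) H),  *)
(* eps the counit, S the antipode.                                           *)
Record Hopf_axioms (k : fieldType) (H : algType k)
    (Delta : H -> seq (H * H)) (eps : H -> k) (S : H -> H) : Prop := {
  eps_linear : forall (a : k) x y, eps (a *: x + y) = a * eps x + eps y;
  eps_mul : forall x y, eps (x * y) = eps x * eps y;
  eps_one : eps 1 = 1;
  Delta_linear : forall (W : lmodType k) (f : H -> H -> W), bilinear_map f ->
    forall (a : k) x y,
      tsum f (Delta (a *: x + y)) = a *: tsum f (Delta x) + tsum f (Delta y);
  Delta_mul : forall (W : lmodType k) (f : H -> H -> W), bilinear_map f ->
    forall x y, tsum f (Delta (x * y)) =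
      \sum_(p <- Delta x) \sum_(q <- Delta y) f (p.1 * q.1) (p.2 * q.2);
  Delta_one : forall (W : lmodType k) (f : H -> H -> W), bilinear_map f ->
    tsum f (Delta 1) = f 1 1;
  Delta_coassoc : forall (W : lmodType k) (f : H -> H -> H -> W),
    trilinear_map f -> forall x,
      \sum_(p <- Delta x) \sum_(q <- Delta p.1) f q.1 q.2 p.2 =
      \sum_(p <- Delta x) \sum_(q <- Delta p.2) f p.1 q.1 q.2;
  counit_l : forall x, \sum_(p <- Delta x) eps p.1 *: p.2 = x;
  counit_r : forall x, \sum_(p <- Delta x) eps p.2 *: p.1 = x;
  S_linear : forall (a : k) x y, S (a *: x + y) = a *: S x + S y;
  antipode_l : forall x, \sum_(p <- Delta x) S p.1 * p.2 = (eps x)%:A;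
  antipode_r : forall x, \sum_(p <- Delta x) p.1 * S p.2 = (eps x)%:A
}.

Record module_algebra (k : fieldType) (H : algType k)
    (Delta : H -> seq (H * H)) (eps : H -> k) (A : algType k)
    (act : H -> A -> A) : Prop := {
  act_linear_l : forall (c : k) h g a, act (c *: h + g) a = c *: act h a + act g a;
  act_linear_r : forall (c : k) h a b, act h (c *: a + b) = c *: act h a + act h b;
  act_one : forall a, act 1 a = a;
  act_mul : forall g h a, act (g * h) a = act g (act h a);
  act_prod : forall h a b,
    act h (a * b) = \sum_(p <- Delta h) act p.1 a * act p.2 b;
  act_unit : forall h, act h 1 = eps h *: 1
}.

Section Rings.
Variable R : pzRingType.

Definition is_ideal (I : R -> Prop) : Prop :=
  [/\ I 0, (forall x y, I x -> I y -> I (x + y)) &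
      (forall a x, I x -> I (a * x) /\ I (x * a))].

(* I J is contained in P  (P is closed under finite sums) *)
Definition prod_sub (I J P : R -> Prop) : Prop :=
  forall x y, I x -> J y -> P (x * y).

Definition is_prime_ideal (P : R -> Prop) : Prop :=
  [/\ is_ideal P, ~ P 1 &
      forall I J, is_ideal I -> is_ideal J -> prod_sub I J P ->
        incl I P \/ incl J P].

Definition is_submodule (V : lmodType R) (W : V -> Prop) : Prop :=
  [/\ W 0, (forall x y, W x -> W y -> W (x + y)) &
      (forall (a : R) x, W x -> W (a *: x))].

Definition irreducible_module (V : lmodType R) : Prop :=
  (exists v : V, v != 0) /\
  forall W : V -> Prop, is_submodule W -> (forall v, W v -> v = 0) \/ (forall v, W v).

Definition annihilator (V : lmodType R) : R -> Prop :=
  fun a => forall v : V, a *: v = 0.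

Definition is_primitive_ideal (P : R -> Prop) : Prop :=
  exists V : lmodType R, irreducible_module V /\ forall a, P a <-> annihilator V a.

Definition Jacobson_property : Prop :=
  forall P, is_prime_ideal P ->
    forall a, (forall Q, is_primitive_ideal Q -> incl P Q -> Q a) -> P a.

Definition dense_ideal (I : R -> Prop) : Prop :=
  [/\ is_ideal I,
      (forall x, (forall y, I y -> x * y = 0) -> x = 0) &
      (forall x, (forall y, I y -> y * x = 0) -> x = 0)].

Definition iprod (I J : R -> Prop) : R -> Prop :=
  fun z => exists s : seq (R * R),
    (forall p, p \in s -> I p.1 /\ J p.2) /\ z = \sum_(p <- s) p.1 * p.2.

(* A representative of an element q of Q R: a triple (I, f, g) with I dense, *)
(* f : I -> R a left R-module map (x |-> x q), g : I -> R a right R-module   *)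
(* map (y |-> q y), with (x f) y = x (g y)  (Passman's construction).       *)
Record qrep := QRep { qdom : R -> Prop; qright : R -> R; qleft : R -> R }.

Definition qrep_ok (q : qrep) : Prop :=
  dense_ideal (qdom q) /\
  [/\ (forall x y, qdom q x -> qdom q y -> qright q (x + y) = qright q x + qright q y),
      (forall r x, qdom q x -> qright q (r * x) = r * qright q x),
      (forall x y, qdom q x -> qdom q y -> qleft q (x + y) = qleft q x + qleft q y),
      (forall r x, qdom q x -> qleft q (x * r) = qleft q x * r) &
      (forall x y, qdom q x -> qdom q y -> qright q x * y = x * qleft q y)].

Definition qeq (q1 q2 : qrep) : Prop :=
  exists K, [/\ dense_ideal K, incl K (qdom q1), incl K (qdom q2) &
    forall x, K x -> qright q1 x = qright q2 x /\ qleft q1 x = qleft q2 x].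

Definition qadd (q1 q2 : qrep) : qrep :=
  QRep (fun x => qdom q1 x /\ qdom q2 x)
       (fun x => qright q1 x + qright q2 x) (fun y => qleft q1 y + qleft q2 y).

Definition qmul (q1 q2 : qrep) : qrep :=
  QRep (iprod (qdom q2) (qdom q1))
       (fun x => qright q2 (qright q1 x)) (fun y => qleft q1 (qleft q2 y)).

Definition qemb (r : R) : qrep := QRep (fun _ => True) (fun x => x * r) (fun y => r * y).

Definition qcenter (q : qrep) : Prop :=
  qrep_ok q /\ forall q', qrep_ok q' -> qeq (qmul q q') (qmul q' q).

Definition Dq (q : qrep) : R -> Prop := fun d =>
  (forall r, exists s, qeq (qmul (qmul q (qemb r)) (qemb d)) (qemb s)) /\
  (forall r, exists s, qeq (qmul (qmul (qemb d) (qemb r)) q) (qemb s)).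
End Rings.

Section HRings.
Variables (k : fieldType) (H : algType k).

Definition CH (B : algType k) (actB : H -> B -> B) (q : qrep B) : Prop :=
  qcenter q /\
  forall h d, Dq q d ->
    (forall s, qeq (qmul (qemb d) q) (qemb s) ->
       qeq (qemb (actB h s)) (qmul (qemb (actB h d)) q)) /\
    (forall s, qeq (qmul q (qemb d)) (qemb s) ->
       qeq (qemb (actB h s)) (qmul q (qemb (actB h d)))).

Definition qpeval (B : algType k) (p : {poly k}) (q : qrep B) : qrep B :=
  foldr (fun c acc => qadd (qmul acc q) (qemb (c%:A : B))) (qemb 0) p.

Definition CH_algebraic (B : algType k) (actB : H -> B -> B) : Prop :=
  forall q, CH actB q -> exists p : {poly k}, p != 0 /\ qeq (qpeval p q) (qemb 0).

Variables (A : algType k) (act : H -> A -> A).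

Definition is_H_ideal (I : A -> Prop) : Prop :=
  is_ideal I /\ forall h a, I a -> I (act h a).

(* H-prime: A/I <> 0 and the product of two nonzero H-ideals of A/I is    *)
(* nonzero; H-ideals of A/I = H-ideals of A containing I.                *)
Definition is_H_prime (I : A -> Prop) : Prop :=
  [/\ is_H_ideal I, ~ I 1 &
      forall J K, is_H_ideal J -> is_H_ideal K -> incl I J -> incl I K ->
        prod_sub J K I -> incl J I \/ incl K I].

Definition colonH (P : A -> Prop) : A -> Prop := fun a => forall h, P (act h a).

Definition kappa_surjective : Prop :=
  forall I, is_H_prime I ->
    exists P, is_prime_ideal P /\ forall a, colonH P a <-> I a.

Definition H_locally_closed (I : A -> Prop) : Prop :=
  is_H_prime I /\
  exists a, ~ I a /\
    forall J, is_H_prime J -> incl I J -> (exists b, J b /\ ~ I b) -> J a.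

Definition H_primitive (I : A -> Prop) : Prop :=
  exists P, is_primitive_ideal P /\ forall a, I a <-> colonH P a.

(* H-rational: I is H-prime and C^H(A/I) is algebraic over k; A/I is given *)
(* by any surjective H-equivariant k-algebra map pi : A -> B with kernel I. *)
Definition H_rational (I : A -> Prop) : Prop :=
  is_H_prime I /\
  forall (B : algType k) (actB : H -> B -> B) (pi : A -> B),
    (forall (c : k) a b, pi (c *: a + b) = c *: pi a + pi b) ->
    (forall a b, pi (a * b) = pi a * pi b) -> pi 1 = 1 ->
    (forall b, exists a, pi a = b) ->
    (forall a, pi a = 0 <-> I a) ->
    (forall h a, pi (act h a) = actB h (pi a)) ->
    CH_algebraic actB.
End HRings.

Definition End_eval (k : fieldType) (A : algType k) (V : lmodType A)
    (p : {poly k}) (phi : V -> V) (v : V) : V :=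
  \sum_(i < size p) ((p`_i)%:A : A) *: iter i phi v.

Definition weak_Nullstellensatz (k : fieldType) (A : algType k) : Prop :=
  forall V : lmodType A, irreducible_module V ->
    forall phi : V -> V,
      (forall x y, phi (x + y) = phi x + phi y) ->
      (forall (a : A) x, phi (a *: x) = a *: phi x) ->
      exists p : {poly k}, p != 0 /\ forall v, End_eval p phi v = 0.

(* A primitive ideal P is the annihilator of an irreducible module V, hence prime,
   and then P:H is H-prime.

   (a) Write the H-locally closed H-prime I as P:H with P prime, and pick a outside I
   lying in every strictly larger H-prime.  Some h.a is outside P, hence, by the
   Jacobson property, outside some primitive Q containing P.  Then Q:H is an H-prime
   containing I but not a, so Q:H = I.

   (b) Let I = P:H with P = ann V, and B = A/I; V is a B-module since I is contained
   in P.  An element q of C^H(B) is given by right multiplication on a dense ideal K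
   of B.  Some e with e q = t in B has e v0 <> 0 for some v0 (otherwise all
   H-translates of K kill V, so K = 0 in B, impossible for a dense ideal), and then
   V = A e v0.  As q is central, a e v0 |-> a t v0 is a well defined
   A-endomorphism phi of V with phi (e' w) = t' w whenever e' q = t'.  The weak
   Nullstellensatz gives p <> 0 with p(phi) = 0.  For x in K^n, consecutive terms of
   x, x q, x q^2, ... are such pairs (e', t'), and so are their H-translates since q
   is H-invariant; hence p(q) x and all its H-translates annihilate V, i.e.
   p(q) x = 0 in B.  So p(q) vanishes on the dense ideal K^n. *)

From HB Require Import structures.
From mathcomp Require Import all_boot all_order all_algebra.
From Stdlib Require Import Classical IndefiniteDescription.
From Stdlib Require Import FunctionalExtensionality PropExtensionality.
Set Implicit Arguments. Unset Strict Implicit. Unset Printing Implicit Defensive.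
Import GRing.Theory.
Local Open Scope ring_scope.

Section Ideals.
Variable R : pzRingType.
Implicit Types (I J : R -> Prop) (x y : R).

Lemma ideal0 I : is_ideal I -> I 0.
Proof. by case. Qed.

Lemma idealD I x y : is_ideal I -> I x -> I y -> I (x + y).
Proof. by case=> _ + _; apply. Qed.

Lemma idealMl I a x : is_ideal I -> I x -> I (a * x).
Proof. by case=> _ _ h /(h a) []. Qed.

Lemma idealMr I a x : is_ideal I -> I x -> I (x * a).
Proof. by case=> _ _ h /(h a) []. Qed.

Lemma ideal_sum I (T : eqType) (s : seq T) (F : T -> R) :
  is_ideal I -> (forall t, t \in s -> I (F t)) -> I (\sum_(t <- s) F t).
Proof.
move=> hI; elim: s => [|t s IHs] hs; first by rewrite big_nil; apply: ideal0.
rewrite big_cons; apply: idealD => //; first by apply: hs; rewrite mem_head.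
by apply: IHs => t' ts; apply: hs; rewrite inE ts orbT.
Qed.

Lemma dense_eqr I x y : dense_ideal I -> (forall z, I z -> x * z = y * z) -> x = y.
Proof.
case=> _ dI _ xyI; apply/eqP; rewrite -subr_eq0; apply/eqP/dI => z Iz.
by rewrite mulrBl xyI // subrr.
Qed.

Lemma dense_eql I x y : dense_ideal I -> (forall z, I z -> z * x = z * y) -> x = y.
Proof.
case=> _ _ dI Ixy; apply/eqP; rewrite -subr_eq0; apply/eqP/dI => z Iz.
by rewrite mulrBr Ixy // subrr.
Qed.

Lemma dense_full : dense_ideal (fun _ : R => True).
Proof.
split; first by split.
- by move=> x /(_ 1 I); rewrite mulr1.
- by move=> x /(_ 1 I); rewrite mul1r.
Qed.

Lemma iprodM I J x y : I x -> J y -> iprod I J (x * y).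
Proof.
move=> Ix Jy; exists [:: (x, y)]; split; last by rewrite big_seq1.
by move=> p; rewrite inE => /eqP ->.
Qed.

Lemma iprod_ideal I J : is_ideal I -> is_ideal J -> is_ideal (iprod I J).
Proof.
move=> hI hJ; split.
- by exists [::]; rewrite big_nil.
- move=> _ _ [s [hs ->]] [t [ht ->]]; exists (s ++ t); split; last by rewrite big_cat.
  by move=> p; rewrite mem_cat => /orP [/hs|/ht].
- move=> a _ [s [hs ->]]; split.
  + exists [seq (a * p.1, p.2) | p <- s]; split.
      by move=> _ /mapP [p /hs [? ?] ->]; split => //; apply: idealMl.
    by rewrite big_map mulr_sumr; apply: eq_bigr => p _; rewrite mulrA.
  + exists [seq (p.1, p.2 * a) | p <- s]; split.
      by move=> _ /mapP [p /hs [? ?] ->]; split => //; apply: idealMr.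
    by rewrite big_map mulr_suml; apply: eq_bigr => p _; rewrite mulrA.
Qed.

Lemma iprod_dense I J : dense_ideal I -> dense_ideal J -> dense_ideal (iprod I J).
Proof.
case=> hI dI1 dI2 [hJ dJ1 dJ2]; split; first exact: iprod_ideal.
- move=> x xIJ0; apply: dI1 => y Iy; apply: dJ1 => z Jz.
  by rewrite -mulrA; apply: xIJ0; apply: iprodM.
- move=> x IJx0; apply: dJ2 => z Jz; apply: dI2 => y Iy.
  by rewrite mulrA; apply: IJx0; apply: iprodM.
Qed.

Lemma iprod_subl I J : is_ideal I -> incl (iprod I J) I.
Proof.
by move=> hI _ [s [hs ->]]; apply: ideal_sum => // p /hs [Ip _]; apply: idealMr.
Qed.

Lemma iprodSr I J J' : incl J J' -> incl (iprod I J) (iprod I J').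
Proof. by move=> sJ x [s [hs ->]]; exists s; split => // p /hs [? /sJ]. Qed.

Fixpoint ipow I n : R -> Prop :=
  if n is n'.+1 then iprod I (ipow I n') else fun _ => True.

Lemma ipow_dense I n : dense_ideal I -> dense_ideal (ipow I n).
Proof. by move=> dI; elim: n => [|n IHn] /=; [exact: dense_full | exact: iprod_dense]. Qed.

End Ideals.

Section Modules.
Variable R : pzRingType.

Lemma annihilator_ideal (V : lmodType R) : is_ideal (annihilator V).
Proof.
split.
- by move=> v; rewrite scale0r.
- by move=> x y hx hy v; rewrite scalerDl hx hy addr0.
- by move=> a x hx; split => v; rewrite -scalerA ?hx ?scaler0.
Qed.

Lemma irreducible_cyclic (V : lmodType R) (u : V) :
  irreducible_module V -> u <> 0 -> forall v, exists a, v = a *: u.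
Proof.
move=> [_ irrV] u0 v.
have subRu : is_submodule (fun v : V => exists a, v = a *: u).
  split.
  - by exists 0; rewrite scale0r.
  - by move=> _ _ [a ->] [b ->]; exists (a + b); rewrite scalerDl.
  - by move=> a _ [b ->]; exists (a * b); rewrite scalerA.
case: (irrV _ subRu) => [Ru0|]; last exact.
by case: u0; apply: Ru0; exists 1; rewrite scale1r.
Qed.

Lemma primitive_ideal_prime (P : R -> Prop) : is_primitive_ideal P -> is_prime_ideal P.
Proof.
case=> V [[[v0 v0_neq0] irrV] annP].
have [ann0 annD annM] := annihilator_ideal V.
have hP : is_ideal P.
  split; first exact/annP.
  - by move=> x y /annP hx /annP hy; apply/annP; apply: annD.
  - by move=> a x /annP /(annM a) [? ?]; split; apply/annP.
split => //.
  by move/annP/(_ v0); rewrite scale1r => v00; rewrite v00 eqxx in v0_neq0.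
move=> I J hI hJ IJP; case: (classic (incl I P)) => [|/not_all_ex_not [x]]; first by left.
move=> /(imply_to_and (I x)) [Ix Px']; right.
have [v xv_neq0] : exists v : V, x *: v <> 0.
  by apply: NNPP => xV0; apply/Px'/annP => v; apply: NNPP => ?; apply: xV0; exists v.
have subV : is_submodule (fun w : V => forall x, I x -> x *: w = 0).
  split.
  - by move=> ? _; rewrite scaler0.
  - by move=> a b ha hb z Iz; rewrite scalerDr ha // hb // addr0.
  - by move=> a w hw z Iz; rewrite scalerA; apply: hw; apply: idealMr.
case: (irrV _ subV) => [IV0|IVall]; last by case: xv_neq0; apply: IVall.
move=> y Jy; apply/annP => w; apply: IV0 => z Iz.
by rewrite scalerA; apply: (proj1 (annP _) (IJP _ _ Iz Jy) w).
Qed.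

End Modules.

Lemma qemb_ok (R : pzRingType) (r : R) : qrep_ok (qemb r).
Proof.
split; first exact: dense_full.
by split=> /= *; rewrite ?mulrDl ?mulrDr ?mulrA.
Qed.

(* [mulq_eq q e t] encodes [e q = t] in [Q R]: right multiplication by [q], defined
   on [qdom q], sends [x e] to [x t]. *)
Definition mulq_eq (R : pzRingType) (q : qrep R) (e t : R) : Prop :=
  forall x, qdom q x -> qright q (x * e) = x * t.

Section MartindaleQuotient.
Variables (R : pzRingType) (q : qrep R).
Hypothesis q_ok : qrep_ok q.
Local Notation K := (qdom q).
Local Notation phi := (qright q).
Local Notation psi := (qleft q).

Lemma qdom_dense : dense_ideal K.
Proof. by case: q_ok. Qed.

Lemma qdom_ideal : is_ideal K.
Proof. by case: qdom_dense. Qed.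

Lemma qrightD x y : K x -> K y -> phi (x + y) = phi x + phi y.
Proof. by case: q_ok => _ [+ _ _ _ _]; apply. Qed.

Lemma qrightMl r x : K x -> phi (r * x) = r * phi x.
Proof. by case: q_ok => _ [_ + _ _ _]; apply. Qed.

Lemma qleftMr r y : K y -> psi (y * r) = psi y * r.
Proof. by case: q_ok => _ [_ _ _ + _]; apply. Qed.

Lemma qright_qleft x y : K x -> K y -> phi x * y = x * psi y.
Proof. by case: q_ok => _ [_ _ _ _ +]; apply. Qed.

Lemma qright0 : phi 0 = 0.
Proof.
have K0 : K 0 := ideal0 qdom_ideal.
by rewrite -[X in phi X](mul0r 0) qrightMl // mul0r.
Qed.

Lemma qright_sum (T : eqType) (s : seq T) (F : T -> R) :
  (forall t, t \in s -> K (F t)) -> phi (\sum_(t <- s) F t) = \sum_(t <- s) phi (F t).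
Proof.
elim: s => [|t s IHs] Ks; first by rewrite !big_nil qright0.
have Ks' t' : t' \in s -> K (F t') by move=> ts; apply: Ks; rewrite inE ts orbT.
rewrite !big_cons qrightD ?IHs //; first by apply: Ks; rewrite mem_head.
exact: ideal_sum qdom_ideal Ks'.
Qed.

Lemma mulq_eq_qright x : K x -> mulq_eq q x (phi x).
Proof. by move=> Kx y Ky; apply: qrightMl. Qed.

Lemma qeq_emb_on_dom q' s : incl K (qdom q') ->
  (forall x, K x -> qright q' x = x * s /\ qleft q' x = s * x) -> qeq q' (qemb s).
Proof. by move=> Kq' eq'; exists K; split => //; apply: qdom_dense. Qed.

Lemma qeq_mulq_eq e t : qeq (qemb t) (qmul (qemb e) q) -> mulq_eq q e t.
Proof.
case=> L [dL _ _ eL] x Kx.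
have [hK _ _] := qdom_dense; have [hL _ _] := dL.
apply: (dense_eql dL) => z Lz.
have Kxe : K (x * e) := idealMr e hK Kx.
have /= [zxt _] := eL _ (idealMr x hL Lz).
by rewrite -qrightMl // !mulrA zxt.
Qed.

Section Central.
Hypothesis q_cent : forall q', qrep_ok q' -> qeq (qmul q q') (qmul q' q).

Lemma qcomm_emb r : exists L, [/\ dense_ideal L, incl L K &
  forall x, L x -> phi x * r = phi (x * r) /\ psi (r * x) = r * psi x].
Proof.
have [L [dL _ LK eL]] := q_cent (qemb_ok r).
by exists L; split => // x /LK /iprod_subl; apply; apply: qdom_ideal.
Qed.

Lemma qrightMr r x : K x -> phi (x * r) = phi x * r.
Proof.
move=> Kx; have [L [dL LK eL]] := qcomm_emb r.
have [hK _ _] := qdom_dense.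
apply: (dense_eqr dL) => z Lz; have Kz := LK _ Lz.
have Kxr : K (x * r) := idealMr r hK Kx.
have Krz : K (r * z) := idealMl r hK Kz.
by rewrite qright_qleft // -(mulrA (phi x)) qright_qleft // (eL z Lz).2 mulrA.
Qed.

Lemma qleftMl r y : K y -> psi (r * y) = r * psi y.
Proof.
move=> Ky; have [L [dL LK eL]] := qcomm_emb r.
have [hK _ _] := qdom_dense.
apply: (dense_eql dL) => z Lz; have Kz := LK _ Lz.
have Kry : K (r * y) := idealMl r hK Ky.
have Kzr : K (z * r) := idealMr r hK Kz.
by rewrite -qright_qleft // mulrA (eL z Lz).1 qright_qleft // mulrA.
Qed.

Lemma qleft_qright x : K x -> psi x = phi x.
Proof.
move=> Kx; apply: (dense_eqr qdom_dense) => z Kz.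
by rewrite -qleftMr // qleftMl ?qright_qleft //; apply: idealMr qdom_ideal Kz.
Qed.

Lemma qright_comm x y : K x -> K y -> phi x * y = x * phi y.
Proof. by move=> Kx Ky; rewrite qright_qleft // qleft_qright. Qed.

Lemma ipow_qright n x : ipow K n.+1 x -> ipow K n (phi x).
Proof.
have [hKn _ _] := ipow_dense n qdom_dense.
case=> s [Ks ->]; rewrite qright_sum; last by move=> p /Ks [Kp _]; apply: idealMr qdom_ideal Kp.
by apply: ideal_sum => // p /Ks [Kp Knp]; rewrite qrightMr //; apply: idealMl.
Qed.

Lemma ipow_iter_qright n x : ipow K n x -> forall i, (i < n)%N -> K (iter i phi x).
Proof.
elim: n x => [|n IHn] x Knx [|i] //= lt_in.
  exact: iprod_subl qdom_ideal _ Knx.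
by rewrite -iterS iterSr; apply: IHn => //; apply: ipow_qright.
Qed.

Lemma iter_qleft n x : (forall i, (i < n)%N -> K (iter i phi x)) ->
  forall i, (i < n)%N -> iter i psi x = iter i phi x.
Proof.
move=> Kiter; elim=> [|i IHi] lt_in //=.
have lt_in' : (i < n)%N := ltnW lt_in.
by rewrite IHi // qleft_qright //; apply: Kiter.
Qed.

Lemma mulq_eqMr e t r : mulq_eq q e t -> mulq_eq q (e * r) (t * r).
Proof.
move=> et x Kx; rewrite mulrA qrightMr ?et ?mulrA //.
exact: idealMr qdom_ideal Kx.
Qed.

Lemma mulq_eq_left e t y : mulq_eq q e t -> K y -> t * y = e * phi y.
Proof.
move=> et Ky; apply: (dense_eql qdom_dense) => z Kz.
have Kze : K (z * e) := idealMr e qdom_ideal Kz.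
by rewrite !mulrA -et // qright_comm.
Qed.

Lemma mulq_eq_cross e t e' t' r :
  mulq_eq q e t -> mulq_eq q e' t' -> e * r * t' = t * r * e'.
Proof.
move=> et et'; apply: (dense_eql qdom_dense) => z Kz.
have Kze : K (z * e) := idealMr e qdom_ideal Kz.
have Kzer : K (z * e * r) := idealMr r qdom_ideal Kze.
by rewrite !mulrA -et' // -(et z Kz) -!qrightMr.
Qed.

Lemma mulq_eq_qeq e t : mulq_eq q e t -> qeq (qmul (qemb e) q) (qemb t).
Proof.
move=> et; apply: qeq_emb_on_dom => [x Kx|x Kx /=]; first by rewrite -[x]mulr1; apply: iprodM.
by rewrite et // qleft_qright // -(mulq_eq_left et Kx).
Qed.

Lemma mulq_eq_Dq e t : mulq_eq q e t -> Dq q e.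
Proof.
move=> et; have hK := qdom_ideal; split=> r.
- exists (r * t); apply: qeq_emb_on_dom => [x Kx|x Kx /=].
    by rewrite -[x]mul1r; apply: iprodM => //; rewrite -[x]mul1r; apply: iprodM.
  have Kex : K (e * x) := idealMl e hK Kx.
  have Kxr : K (x * r) := idealMr r hK Kx.
  rewrite -qrightMr // -qrightMr // et // -mulrA; split => //.
  by rewrite qleftMl // qleft_qright // qrightMl // -(mulq_eq_left et Kx) mulrA.
- exists (t * r); apply: qeq_emb_on_dom => [x Kx|x Kx /=].
    by rewrite -[x]mulr1; apply: iprodM => //; rewrite -[1]mulr1; apply: iprodM.
  have Krx : K (r * x) := idealMl r hK Kx.
  have Kxe : K (x * e) := idealMr e hK Kx.
  rewrite qrightMr // et // mulrA; split => //.
  by rewrite qleft_qright // -qrightMl // -(mulq_eq_left et Krx) mulrA.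
Qed.

End Central.
End MartindaleQuotient.

Section QuotientPoly.
Variables (k : fieldType) (R : algType k) (q : qrep R).
Local Notation K := (qdom q).
Local Notation phi := (qright q).
Local Notation psi := (qleft q).

Lemma qpeval_dom (p : {poly k}) : incl (ipow K (size p)) (qdom (qpeval p q)).
Proof.
rewrite /qpeval; elim: (polyseq p) => [|c cs IHcs] x //= Kx.
by split => //; apply: iprodSr IHcs _ Kx.
Qed.

Lemma qleft_qpeval (p : {poly k}) y :
  qleft (qpeval p q) y = \sum_(i < size p) p`_i *: iter i psi y.
Proof.
rewrite /qpeval; elim: (polyseq p) y => [|c cs IHcs] y /=; first by rewrite big_ord0 mul0r.
rewrite IHcs big_ord_recl /= mulr_algl addrC; congr (_ + _).
by apply: eq_bigr => i _; rewrite -iterS iterSr.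
Qed.

Lemma qright_qpeval (p : {poly k}) x : qrep_ok q ->
  (forall i, (i < size p)%N -> K (iter i phi x)) ->
  qright (qpeval p q) x = \sum_(i < size p) p`_i *: iter i phi x.
Proof.
move=> q_ok; have hK := qdom_ideal q_ok.
rewrite /qpeval; elim: (polyseq p) => [|c cs IHcs] Kiter /=; first by rewrite big_ord0 mulr0.
have Kiter' i : (i < size cs)%N -> K (iter i phi x) by move=> ?; apply: Kiter; apply: ltnW.
have KZiter (i : 'I_(size cs)) : K (cs`_i *: iter i phi x).
  by rewrite -mulr_algl; apply/(idealMl _ hK)/Kiter'.
rewrite IHcs // big_ord_recl /= mulr_algr addrC (qright_sum q_ok) //.
congr (_ + _); apply: eq_bigr => i _.
by rewrite add0n -mulr_algl (qrightMl q_ok) ?mulr_algl //; apply: Kiter'.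
Qed.

End QuotientPoly.

Lemma mulq_eq_act (k : fieldType) (H B : algType k) (actB : H -> B -> B) (q : qrep B) h e t :
  CH actB q -> mulq_eq q e t -> mulq_eq q (actB h e) (actB h t).
Proof.
case=> [[q_ok q_cent] CHq] et; apply: (qeq_mulq_eq q_ok).
exact: (CHq h e (mulq_eq_Dq q_ok q_cent et)).1 t (mulq_eq_qeq q_ok q_cent et).
Qed.

Section QuotientEndomorphism.
Variables (A B : pzRingType) (pi : {rmorphism A -> B}).
Variable V : lmodType A.
Hypothesis ker_pi_ann : forall a, pi a = 0 -> annihilator V a.
Variable q : qrep B.

Lemma act_pi_eq a a' (w : V) : pi a = pi a' -> a *: w = a' *: w.
Proof.
move=> eq_pi; apply/eqP; rewrite -subr_eq0 -scalerBl; apply/eqP.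
by apply: (ker_pi_ann _ w); rewrite rmorphB eq_pi subrr.
Qed.

Lemma iter_mulq_chain (phi : V -> V) (a : nat -> A) n (w : V) :
  (forall a c w, mulq_eq q (pi a) (pi c) -> phi (a *: w) = c *: w) ->
  (forall i, (i.+1 < n)%N -> mulq_eq q (pi (a i)) (pi (a i.+1))) ->
  forall i, (i < n)%N -> iter i phi (a 0%N *: w) = a i *: w.
Proof.
move=> phi_mulq chain; elim=> [|i IHi] lt_in //=.
by rewrite IHi ?(ltnW lt_in) //; apply: phi_mulq; apply: chain.
Qed.

Hypothesis irrV : irreducible_module V.
Hypotheses (q_ok : qrep_ok q) (q_cent : forall q', qrep_ok q' -> qeq (qmul q q') (qmul q' q)).
Variables (a0 c0 : A) (v0 : V).
Hypotheses (a0c0 : mulq_eq q (pi a0) (pi c0)) (a0v0 : a0 *: v0 <> 0).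

Lemma mulq_denominators_separate (w : V) :
  (forall a c, mulq_eq q (pi a) (pi c) -> a *: w = 0) -> w = 0.
Proof.
have subV : is_submodule (fun w : V => forall a c, mulq_eq q (pi a) (pi c) -> a *: w = 0).
  split.
  - by move=> a c _; rewrite scaler0.
  - by move=> x y hx hy a c ac; rewrite scalerDr (hx a c) // (hy a c) // addr0.
  - move=> b x hx a c ac; rewrite scalerA; apply: (hx _ (c * b)).
    by rewrite !rmorphM; apply: mulq_eqMr.
case: (proj2 irrV _ subV) => [subV0|subVT]; first exact: subV0.
by case: a0v0; apply: subVT a0c0.
Qed.

Lemma act_mulq_cross a c r (w : V) :
  mulq_eq q (pi a) (pi c) -> (a * r * c0) *: w = (c * r * a0) *: w.
Proof.
by move=> ac; apply: act_pi_eq; rewrite !rmorphM (mulq_eq_cross q_ok q_cent (pi r) ac a0c0).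
Qed.

Lemma quotient_endomorphism_wd a a' :
  a *: (a0 *: v0) = a' *: (a0 *: v0) -> (a * c0) *: v0 = (a' * c0) *: v0.
Proof.
move=> eq_a; apply/eqP; rewrite -subr_eq0 -scalerBl -mulrBl; apply/eqP.
apply: mulq_denominators_separate => e t et.
by rewrite scalerA mulrA (act_mulq_cross _ _ et) -!scalerA scalerBl eq_a subrr scaler0.
Qed.

Lemma quotient_endomorphism : exists phi : V -> V,
  [/\ forall x y, phi (x + y) = phi x + phi y,
      forall (a : A) x, phi (a *: x) = a *: phi x &
      forall a c w, mulq_eq q (pi a) (pi c) -> phi (a *: w) = c *: w].
Proof.
have [coord coordK] : exists coord : V -> A, forall v, v = coord v *: (a0 *: v0).
  exact: functional_choice (irreducible_cyclic irrV a0v0).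
exists (fun v => (coord v * c0) *: v0); split.
- move=> x y; rewrite -scalerDl -mulrDl; apply: quotient_endomorphism_wd.
  by rewrite scalerDl -!coordK.
- move=> a x; rewrite scalerA mulrA; apply: quotient_endomorphism_wd.
  by rewrite -scalerA -!coordK.
- move=> a c w ac; rewrite (@quotient_endomorphism_wd _ (a * coord w)).
    by rewrite (act_mulq_cross _ _ ac) -!scalerA -coordK.
  by rewrite -scalerA -!coordK.
Qed.

End QuotientEndomorphism.

Section ModuleAlgebra.
Variables (k : fieldType) (H : algType k) (Delta : H -> seq (H * H)) (eps : H -> k).
Variables (A : algType k) (act : H -> A -> A).
Hypothesis MA : module_algebra Delta eps act.

HB.instance Definition _ h :=
  GRing.isLinear.Build k A A *:%R (act h) (fun c => act_linear_r MA c h).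

Lemma colonH_H_prime Q : is_prime_ideal Q -> is_H_prime act (colonH act Q).
Proof.
case=> hQ Q1 primeQ.
have hQH : is_H_ideal act (colonH act Q).
  split; first split.
  - by move=> h; rewrite raddf0; apply: ideal0.
  - by move=> x y hx hy h; rewrite raddfD; apply: idealD (hx h) (hy h).
  - move=> a x hx; split => h; rewrite (act_prod MA); apply: ideal_sum => // p _.
      exact: idealMl.
    exact: idealMr.
  - by move=> h a ha g; rewrite -(act_mul MA).
split => //; first by move/(_ 1); rewrite (act_one MA).
move=> J K [hJ actJ] [hK actK] _ _ JKQH.
have JKQ : prod_sub J K Q by move=> x y Jx Ky; have := JKQH x y Jx Ky 1; rewrite (act_one MA).
case: (primeQ J K hJ hK JKQ) => sQ; [left|right] => x hx h; apply: sQ.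
  exact: actJ.
exact: actK.
Qed.

Lemma H_locally_closed_H_primitive :
  kappa_surjective act -> Jacobson_property A ->
  forall I, H_locally_closed act I -> H_primitive act I.
Proof.
move=> kappa jacobson I [HI [a [Ia' above_a]]].
have [P [primeP PH_I]] := kappa I HI.
have [h Pha'] : exists h, ~ P (act h a).
  apply: NNPP => Pha; apply: Ia'; apply/PH_I => h.
  by apply: NNPP => Pha'; apply: Pha; exists h.
have [Q [primQ PQ Qha']] : exists Q, [/\ is_primitive_ideal Q, incl P Q & ~ Q (act h a)].
  apply: NNPP => noQ; apply: Pha' (jacobson P primeP _ _) => Q primQ PQ.
  by apply: NNPP => Qha'; apply: noQ; exists Q.
have I_QH x : I x -> colonH act Q x by move/PH_I => Px g; apply: PQ.
exists Q; split => // x; split; first exact: I_QH.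
move=> QHx; apply: NNPP => Ix'.
have QHa : colonH act Q a.
  apply: above_a; first exact/colonH_H_prime/primitive_ideal_prime.
  - exact: I_QH.
  - by exists x.
exact: Qha' (QHa h).
Qed.

Section HPrimitive.
Variables (V : lmodType A) (I : A -> Prop).
Hypothesis irrV : irreducible_module V.
Hypothesis I_ann : forall a, I a <-> forall h, annihilator V (act h a).
Variables (B : algType k) (actB : H -> B -> B) (pi : {lrmorphism A -> B}).
Hypothesis piS : forall b, exists a, pi a = b.
Hypothesis piK : forall a, pi a = 0 <-> I a.
Hypothesis piA : forall h a, pi (act h a) = actB h (pi a).
Variable q : qrep B.
Hypothesis CHq : CH actB q.

Lemma ker_pi_ann a : pi a = 0 -> annihilator V a.
Proof. by move/piK/I_ann/(_ 1); rewrite (act_one MA). Qed.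

Lemma exists_nonvanishing_denominator :
  exists a0 c0 (v0 : V), mulq_eq q (pi a0) (pi c0) /\ a0 *: v0 <> 0.
Proof.
have [[q_ok q_cent] _] := CHq.
apply: NNPP => no_den.
have den0 a c (v : V) : mulq_eq q (pi a) (pi c) -> a *: v = 0.
  by move=> ac; apply: NNPP => acv; apply: no_den; exists a, c, v.
have K0 x : qdom q x -> x = 0.
  move=> Kx; have [a pa] := piS x; have [c pc] := piS (qright q x).
  rewrite -pa; apply/piK/I_ann => h v; apply: (den0 _ (act h c)).
  by rewrite !piA pa pc; apply: mulq_eq_act => //; exact (mulq_eq_qright q_ok Kx).
have [_ dK _] := qdom_dense q_ok.
have B10 : (1 : B) = 0 by apply: dK => y Ky; rewrite mul1r (K0 y Ky).
have [[v v_neq0] _] := irrV.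
have := ker_pi_ann (etrans (rmorph1 pi) B10) v; rewrite scale1r => v_eq0.
by rewrite v_eq0 eqxx in v_neq0.
Qed.

Lemma mulq_chain_poly_eq0 (phi : V -> V) (p : {poly k}) :
  (forall a c w, mulq_eq q (pi a) (pi c) -> phi (a *: w) = c *: w) ->
  (forall v, End_eval p phi v = 0) ->
  forall u : nat -> B, (forall i, (i.+1 < size p)%N -> mulq_eq q (u i) (u i.+1)) ->
  \sum_(i < size p) p`_i *: u i = 0.
Proof.
move=> phi_mulq p_phi u chain.
have [a pa] : exists a : nat -> A, forall i, pi (a i) = u i.
  exact: functional_choice (fun i => piS (u i)).
have -> : \sum_(i < size p) p`_i *: u i = pi (\sum_(i < size p) p`_i *: a i).
  by rewrite linear_sum; apply: eq_bigr => i _; rewrite linearZ /= pa.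
apply/piK/I_ann => h w.
have chain_h i : (i.+1 < size p)%N -> mulq_eq q (pi (act h (a i))) (pi (act h (a i.+1))).
  by move=> lt_ip; rewrite !piA !pa; apply: mulq_eq_act => //; apply: chain.
rewrite linear_sum scaler_suml -[RHS](p_phi (act h (a 0%N) *: w)) /End_eval.
apply: eq_bigr => i _; rewrite linearZ /= -[_ *: act h _]mulr_algl -scalerA.
by rewrite (iter_mulq_chain w phi_mulq chain_h).
Qed.

Lemma H_primitive_CH_algebraic :
  weak_Nullstellensatz A -> exists p : {poly k}, p != 0 /\ qeq (qpeval p q) (qemb 0).
Proof.
move=> WN; have [[q_ok q_cent] _] := CHq.
have [a0 [c0 [v0 [a0c0 a0v0]]]] := exists_nonvanishing_denominator.
have [phi [phiD phiZ phi_mulq]] :=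
  quotient_endomorphism ker_pi_ann irrV q_ok q_cent a0c0 a0v0.
have [p [p_neq0 p_phi]] := WN V irrV phi phiD phiZ.
have chain_eq0 := mulq_chain_poly_eq0 phi_mulq p_phi.
exists p; split => //; exists (ipow (qdom q) (size p)); split => //.
- exact: ipow_dense (qdom_dense q_ok).
- exact: qpeval_dom.
- move=> x Kx; have Kiter := ipow_iter_qright q_ok q_cent Kx.
  have chain i : (i.+1 < size p)%N -> mulq_eq q (iter i (qright q) x) (iter i.+1 (qright q) x).
    by move=> lt_ip; exact (mulq_eq_qright q_ok (Kiter _ (ltnW lt_ip))).
  rewrite (qright_qpeval q_ok Kiter) qleft_qpeval /= mulr0 mul0r.
  split; first exact: chain_eq0.
  under eq_bigr => i _ do rewrite (iter_qleft q_ok q_cent Kiter (ltn_ord i)).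
  exact: chain_eq0.
Qed.

End HPrimitive.
End ModuleAlgebra.

Theorem lemma4p2 (k : fieldType) (H : algType k)
    (Delta : H -> seq (H * H)) (eps : H -> k) (S : H -> H)
    (A : algType k) (act : H -> A -> A) :
  Hopf_axioms Delta eps S -> bijective S ->
  module_algebra Delta eps act ->
  ((kappa_surjective act /\ Jacobson_property A) ->
     forall I, H_locally_closed act I -> H_primitive act I) /\
  (weak_Nullstellensatz A ->
     forall I, H_primitive act I -> H_rational act I).
Proof.
move=> _ _ MA; split => [[kappa jacobson]|WN I [P [primP I_PH]]].
  exact: H_locally_closed_H_primitive MA kappa jacobson.
have [V [irrV annP]] := primP.
have I_ann a : I a <-> forall h, annihilator V (act h a).
  split => [/I_PH PHa h | annHa]; first exact/annP/PHa.
  by apply/I_PH => h; apply/annP/annHa.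
split.
  have -> : I = colonH act P :=
    functional_extensionality _ _ (fun a => propositional_extensionality _ _ (I_PH a)).
  exact (colonH_H_prime MA (primitive_ideal_prime primP)).
move=> B actB pi piL piM pi1 piS piK piA q CHq.
pose pi_lrm : {lrmorphism A -> B} :=
  HB.pack pi (GRing.isLinear.Build k A B *:%R pi piL)
             (GRing.isMultiplicative.Build A B pi (conj piM pi1)).
exact (H_primitive_CH_algebraic MA irrV I_ann (pi := pi_lrm) piS piK piA CHq WN).
Qed.
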